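(* For every order-embedding $\sigma\colon O\to O'$ between abstract posets and all causal markings $c,c'$ such that $O\rhd c$ and $O\rhd c'$ are P-markings, we have $O\rhd c\sim_{AC}O\rhd c'$ if and only if $O'\rhd\downarrow_{O'}(c\sigma)\sim_{AC}O'\rhd\downarrow_{O'}(c'\sigma)$.
   Context: Fix a set $Act$ of action labels, an infinite set $\mathcal{E}$ of event names, and a net $N=(S,T,F,l)$ (disjoint places $S$ and transitions $T$, $F\subseteq(S\times T)\cup(T\times S)$, $l\colon T\to Act$, ${}^\bullet t=\{s:(s,t)\in F\}$, $t^\bullet=\{s:(t,s)\in F\}$ nonempty). Posets are finite $Act$-labelled posets $O=(X_O,\preccurlyeq_O,l_O)$ with $X_O\subseteq\mathcal{E}$; $|O|=\{(x,l_O(x))\}$, $x_a=(x,a)$. Morphisms preserve order and labels ($\sigma(x_a)=\sigma(x)_a$); order-embeddings additionally reflect order; isomorphisms are bijective morphisms with morphism inverse. For $K\subseteq|O|$: $\max_O K$ its maximal elements; down-closed if $y\in K,x\preccurlyeq_O y\Rightarrow x\in K$; $\downarrow_O K=\{y\in|O|:\exists x\in K,\ y\preccurlyeq_O x\}$. Causal markings: finite sets $c$ of pairs $K\vdash s$ ($s\in S$, $K$ finite $\subseteq\mathcal{E}\times Act$); $\mathcal{K}(c)$ union of cause sets, $|c|$ set of places, $K\vdash m=\{K\vdash s:s\in m\}$, $c\sigma=\{\sigma(K)\vdash s\}$, $\downarrow_O c=\{\downarrow_O K\vdash s\}$. P-marking $O\rhd c$: all cause sets are down-closed subsets of $|O|$.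 $\delta(O,K,e_a)$: $O$ plus event $e\notin X_O$ labelled $a$ above all of $K$, reflexive-transitively closed. CG$_C$: $O\rhd c\cup c'\xrightarrow{K\vdash e_a}\delta(O,K,e_a)\rhd(\mathcal{K}(c)\cup\{e_a\}\vdash t^\bullet)\cup c'$ whenever $t\in T$, $O\rhd c\cup c'$ a P-marking, $|c|={}^\bullet t$, $a=l(t)$, $e\in\mathcal{E}\setminus X_O$, $K=\max_O\mathcal{K}(c)$. Fix canonical representatives $[O]_\cong$ of isomorphism classes of posets and isomorphisms $\alpha_O\colon O\to[O]_\cong$; $O$ is abstract if $[O]_\cong=O$. For abstract $O$: $\delta(O,K,a)=[\delta(O,K,e_a)]_\cong$, $new(O,K,a)$ its added event, $old(O,K,a)\colon O\to\delta(O,K,a)$ the embedding corresponding to the inclusion. CG$_{AC}$: for each CG$_C$ transition $O\rhd c\xrightarrow{K\vdash e_a}\delta(O,K,e_a)\rhd c'$, a transition $[O]_\cong\rhd c\alpha_O\stackrel{\alpha_O(K)\vdash a}{\Longrightarrow}\delta([O]_\cong,\alpha_O(K),a)\rhd c''$ where $c''$ is $c'$ renamed by $x\mapsto old([O]_\cong,\alpha_O(K),a)(\alpha_O(x))$ for $x\in X_O$ and $e_a\mapsto new([O]_\cong,\alpha_O(K),a)$. An abstract causal bisimulation is a family $\{R_O\}$ indexed by abstract posets of relations on P-markings with abstract posets such that: $(O_1\rhd c_1,O_2\rhd c_2)\in R_O$ implies $O_1=O_2=O$; and if $(O\rhd c_1,O\rhd c_2)\in R_O$ and $O\rhd c_1\stackrel{K\vdash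 a}{\Longrightarrow}O'\rhd c_1'$ then $O\rhd c_2\stackrel{K\vdash a}{\Longrightarrow}O'\rhd c_2'$ with $(O'\rhd c_1',O'\rhd c_2')\in R_{O'}$, and vice versa. $\sim_{AC}$ is the greatest one. *)

From HB Require Import structures.
From mathcomp Require Import all_boot.
From mathcomp Require Import finmap.
Set Implicit Arguments. Unset Strict Implicit. Unset Printing Implicit Defensive.
Local Open Scope fset_scope.

Section CausalNets.
(* E : event names, Act : action labels, S : places, T : transitions *)
Variables (E Act S T : choiceType).

(*   pev O  = |O| = {(x, l_O x) : x in X_O}   (finite set of labelled events)*)
(*   pord O = the order relation on X_O, as a finite set of pairs          *)
Record poset := Poset { pev : {fset (E * Act)} ; pord : {fset (E * E)} }.

Definition evs (O : poset) : {fset E} := [fset p.1 | p in pev O].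

Definition is_poset (O : poset) : Prop :=
  (forall x a b, (x, a) \in pev O -> (x, b) \in pev O -> a = b) /\
  (forall p, p \in pord O -> p.1 \in evs O /\ p.2 \in evs O) /\
  (forall x, x \in evs O -> (x, x) \in pord O) /\
  (forall x y, (x, y) \in pord O -> (y, x) \in pord O -> x = y) /\
  (forall x y z, (x, y) \in pord O -> (y, z) \in pord O -> (x, z) \in pord O).

Definition morphism (O O' : poset) (f : E -> E) : Prop :=
  (forall p, p \in pev O -> (f p.1, p.2) \in pev O') /\
  (forall x y, (x, y) \in pord O -> (f x, f y) \in pord O').

Definition order_embedding (O O' : poset) (f : E -> E) : Prop :=
  morphism O O' f /\
  (forall x y, x \in evs O -> y \in evs O ->
     (f x, f y) \in pord O' -> (x, y) \in pord O).

Definition isomorphism (O O' : poset) (f : E -> E) : Prop :=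
  morphism O O' f /\
  exists g, morphism O' O g /\
    (forall x, x \in evs O -> g (f x) = x) /\
    (forall y, y \in evs O' -> f (g y) = y).

Definition isomorphic (O O' : poset) : Prop := exists f, isomorphism O O' f.

Definition down (O : poset) (K : {fset (E * Act)}) : {fset (E * Act)} :=
  [fset y in pev O | has (fun k => (k \in pev O) && ((y.1, k.1) \in pord O)) K].

Definition down_closed (O : poset) (K : {fset (E * Act)}) : Prop :=
  forall x y, y \in K -> x \in pev O -> (x.1, y.1) \in pord O -> x \in K.

Definition maxO (O : poset) (K : {fset (E * Act)}) : {fset (E * Act)} :=
  [fset x in K | ~~ has (fun y => (y != x) && ((x.1, y.1) \in pord O)) K].

Definition renK (f : E -> E) (K : {fset (E * Act)}) : {fset (E * Act)} :=
  [fset (f p.1, p.2) | p in K].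

Definition delta (O : poset) (K : {fset (E * Act)}) (e : E) (a : Act) : poset :=
  Poset (pev O `|` [fset (e, a)])
        (pord O `|` [fset (y.1, e) | y in down O K] `|` [fset (e, e)]).

(* causal markings: finite sets of pairs K |- s                             *)
Definition marking := {fset ({fset (E * Act)} * S)}.

Definition causes (c : marking) : {fset (E * Act)} := \bigcup_(p <- c) p.1.
Definition places (c : marking) : {fset S} := [fset p.2 | p in c].
Definition renM (f : E -> E) (c : marking) : marking :=
  [fset (renK f p.1, p.2) | p in c].
Definition downM (O : poset) (c : marking) : marking :=
  [fset (down O p.1, p.2) | p in c].

Definition Pmarking (O : poset) (c : marking) : Prop :=
  is_poset O /\
  forall p, p \in c -> fsubset p.1 (pev O) /\ down_closed O p.1.

(* The net N = (S, T, F, l): F splits into Fin (subset of S x T) and        *)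
(* Fout (subset of T x S).                                                  *)
Variables (Fin : S -> T -> Prop) (Fout : T -> S -> Prop) (l : T -> Act).

Definition stepC (O : poset) (M : marking) (K : {fset (E * Act)}) (e : E)
    (a : Act) (O2 : poset) (M2 : marking) : Prop :=
  exists (t : T) (c c1 : marking) (m : {fset S}),
    Pmarking O M /\ M = c `|` c1 /\
    (forall s, s \in places c <-> Fin s t) /\
    (forall s, s \in m <-> Fout t s) /\
    a = l t /\ e \notin evs O /\ K = maxO O (causes c) /\
    O2 = delta O K e a /\
    M2 = [fset (causes c `|` [fset (e, a)], s) | s in m] `|` c1.

(* canonical representatives [O] and isomorphisms alpha_O : O -> [O] *)
Variables (rep : poset -> poset) (alpha : poset -> E -> E).
(* the fixed choice of a fresh event used to define delta(O,K,a), new, old *)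
Variable (fresh : {fset E} -> E).

Definition canonical_reps : Prop :=
  (forall O, is_poset O -> is_poset (rep O) /\ isomorphism O (rep O) (alpha O)) /\
  (forall O O', is_poset O -> is_poset O' -> isomorphic O O' -> rep O = rep O').

Definition fresh_spec : Prop := forall X, fresh X \notin X.

Definition is_abstract (O : poset) : Prop := rep O = O.

Definition deltaE (O : poset) (K : {fset (E * Act)}) (a : Act) : poset :=
  delta O K (fresh (evs O)) a.
Definition deltaA (O : poset) (K : {fset (E * Act)}) (a : Act) : poset :=
  rep (deltaE O K a).
Definition newA (O : poset) (K : {fset (E * Act)}) (a : Act) : E :=
  alpha (deltaE O K a) (fresh (evs O)).
Definition oldA (O : poset) (K : {fset (E * Act)}) (a : Act) : E -> E :=
  alpha (deltaE O K a).

Definition stepAC (O : poset) (M : marking) (K : {fset (E * Act)}) (a : Act)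
    (O2 : poset) (M2 : marking) : Prop :=
  exists (O0 : poset) (M0 : marking) (K0 : {fset (E * Act)}) (e : E)
         (O0' : poset) (M0' : marking),
    stepC O0 M0 K0 e a O0' M0' /\
    O = rep O0 /\ M = renM (alpha O0) M0 /\ K = renK (alpha O0) K0 /\
    O2 = deltaA O K a /\
    M2 = renM (fun x => if x == e then newA O K a
                        else oldA O K a (alpha O0 x)) M0'.

(* abstract causal bisimulations: families R_O indexed by abstract posets *)
Definition ACbisim
    (R : poset -> poset * marking -> poset * marking -> Prop) : Prop :=
  forall O P1 P2, R O P1 P2 ->
    is_abstract O /\ P1.1 = O /\ P2.1 = O /\
    Pmarking O P1.2 /\ Pmarking O P2.2 /\
    (forall K a O' c1', stepAC O P1.2 K a O' c1' ->
       exists c2', stepAC O P2.2 K a O' c2' /\ R O' (O', c1') (O', c2')) /\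
    (forall K a O' c2', stepAC O P2.2 K a O' c2' ->
       exists c1', stepAC O P1.2 K a O' c1' /\ R O' (O', c1') (O', c2')).

Definition simAC (O : poset) (c1 c2 : marking) : Prop :=
  exists R, ACbisim R /\ R O (O, c1) (O, c2).

End CausalNets.

From HB Require Import structures.
From mathcomp Require Import all_boot finmap.
Set Implicit Arguments. Unset Strict Implicit. Unset Printing Implicit Defensive.
Local Open Scope fset_scope.

(* An order-embedding sigma : O -> O' transports transitions: the step of O |> c
   adding a fresh event above K is matched by the step of O' |> down(c sigma)
   adding a fresh event above sigma(K); sigma extends to an order-embedding of the
   two new abstract posets, and the new marking is again the down-closure of the
   image of the old one. Conversely, since sigma reflects the order, cause sets of
   P-markings and their maxima are recovered from their images, so every step of
   O' |> down(c sigma) arises in this way. Hence the images of bisimilar markings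
   form an abstract causal bisimulation, and so do the pairs of markings whose
   images are bisimilar. *)

Section CausalMarkings.
Variables (E Act S T : choiceType).
Implicit Types (O P Q : poset E Act) (K X : {fset E * Act}) (c : marking E Act S).

Lemma in_downP O K y : y \in down O K <->
  y \in pev O /\ exists2 k, k \in K & (k \in pev O) /\ ((y.1, k.1) \in pord O).
Proof.
rewrite !inE; split.
  by case/andP=> -> /hasP [k kK /andP[? ?]]; split => //; exists k.
by case=> -> [k kK [? ?]]; apply/hasP; exists k => //; apply/andP.
Qed.

Lemma in_maxOP O K y : y \in maxO O K <->
  y \in K /\ (forall z, z \in K -> z != y -> (y.1, z.1) \notin pord O).
Proof.
rewrite !inE /=; split.
  case/andP=> -> /hasPn H; split => // z /H; rewrite negb_and.
  by case/orP=> [/negPn -> //| ->].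
case=> -> H; apply/hasPn => z zK; rewrite negb_and.
by case: (eqVneq z y) => //= /(H z zK).
Qed.

Lemma in_renKP (f : E -> E) K x :
  x \in renK f K <-> exists2 p, p \in K & x = (f p.1, p.2).
Proof. by split; [case/imfsetP => p pK ->; exists p | case=> p pK ->; apply/imfsetP; exists p]. Qed.

Lemma renK_f (f : E -> E) K p : p \in K -> (f p.1, p.2) \in renK f K.
Proof. by move=> pK; apply/in_renKP; exists p. Qed.

Lemma renKU (f : E -> E) K X : renK f (K `|` X) = renK f K `|` renK f X.
Proof. exact: imfsetU. Qed.

Lemma renK1 (f : E -> E) (p : E * Act) : renK f [fset p] = [fset (f p.1, p.2)].
Proof. exact: imfset_fset1. Qed.

Lemma renK_comp (f g : E -> E) K : renK f (renK g K) = renK (f \o g) K.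
Proof. by rewrite /renK -imfset_comp. Qed.

Lemma eq_in_renK (f g : E -> E) K :
  (forall p, p \in K -> f p.1 = g p.1) -> renK f K = renK g K.
Proof. by move=> fg; apply: eq_in_imfset => p pK; rewrite /= fg. Qed.

Lemma renK_id K : renK id K = K.
Proof.
apply/fsetP => x; apply/idP/idP => [/in_renKP [p pK ->]|xK]; first by case: p pK.
by apply/in_renKP; exists x => //; case: x xK.
Qed.

Lemma renK_subset (f : E -> E) K X : K `<=` X -> renK f K `<=` renK f X.
Proof. by move/fsubsetP => sKX; apply/fsubsetP => y /in_renKP [p /sKX pX ->]; apply: renK_f. Qed.

Lemma in_causesP c x : x \in causes c <-> exists2 p, p \in c & x \in p.1.
Proof.
rewrite /causes; split.
  by case/bigfcupP => p /andP[pc _] xp; exists p.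
by case=> p pc xp; apply/bigfcupP; exists p => //; rewrite pc.
Qed.

Lemma in_renMP (f : E -> E) c x :
  x \in renM f c <-> exists2 p, p \in c & x = (renK f p.1, p.2).
Proof. by split; [case/imfsetP => p pK ->; exists p | case=> p pK ->; apply/imfsetP; exists p]. Qed.

Lemma in_downMP O c x : x \in downM O c <-> exists2 p, p \in c & x = (down O p.1, p.2).
Proof. by split; [case/imfsetP => p pK ->; exists p | case=> p pK ->; apply/imfsetP; exists p]. Qed.

Lemma renMU (f : E -> E) c (c1 : marking E Act S) : renM f (c `|` c1) = renM f c `|` renM f c1.
Proof. exact: imfsetU. Qed.

Lemma downMU O c (c1 : marking E Act S) : downM O (c `|` c1) = downM O c `|` downM O c1.
Proof. exact: imfsetU. Qed.

Lemma renM_comp (f g : E -> E) c : renM f (renM g c) = renM (f \o g) c.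
Proof. by rewrite /renM -imfset_comp; apply: eq_imfset => // p /=; rewrite renK_comp. Qed.

Lemma renM_id c : renM id c = c.
Proof.
apply/fsetP => x; apply/idP/idP => [/in_renMP [p pc ->]|xc]; first by rewrite renK_id; case: p pc.
by apply/in_renMP; exists x => //; rewrite renK_id; case: x xc.
Qed.

Lemma downM_renM O (f : E -> E) c :
  downM O (renM f c) = [fset (down O (renK f p.1), p.2) | p in c].
Proof. by rewrite /downM /renM -imfset_comp. Qed.

Lemma causes_renM (f : E -> E) c : causes (renM f c) = renK f (causes c).
Proof.
apply/fsetP => x; apply/idP/idP.
  case/in_causesP => q /in_renMP [p pc ->] /= /in_renKP [y yp ->].
  by apply: renK_f; apply/in_causesP; exists p.
case/in_renKP => y /in_causesP [p pc yp] ->; apply/in_causesP.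
by exists (renK f p.1, p.2); [apply/in_renMP; exists p | apply: renK_f].
Qed.

Lemma places_renM (f : E -> E) c : places (renM f c) = places c.
Proof. by rewrite /places /renM -imfset_comp. Qed.

Lemma places_downM O c : places (downM O c) = places c.
Proof. by rewrite /places /downM -imfset_comp. Qed.

Lemma down_sub_pev O K : down O K `<=` pev O.
Proof. by apply/fsubsetP => q /in_downP []. Qed.

Lemma downU O K X : down O (K `|` X) = down O K `|` down O X.
Proof.
apply/fsetP => y; rewrite in_fsetU; apply/idP/orP.
  case/in_downP => yO [k /fsetUP [kK|kX] H]; [left|right]; apply/in_downP; split => //; by exists k.
by case=> /in_downP [yO [k kX H]]; apply/in_downP; split => //; exists k;
  rewrite // in_fsetU kX ?orbT.
Qed.

Lemma down_subset O K X : K `<=` X -> down O K `<=` down O X.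
Proof.
move/fsubsetP => sKX; apply/fsubsetP => y /in_downP [yO [k kK H]].
by apply/in_downP; split => //; exists k => //; apply: sKX.
Qed.

Lemma causes_downM O c : causes (downM O c) = down O (causes c).
Proof.
apply/fsetP => y; apply/idP/idP.
  case/in_causesP => q /in_downMP [p pc ->] /= /in_downP [yO [k kp H]].
  by apply/in_downP; split => //; exists k => //; apply/in_causesP; exists p.
case/in_downP => yO [k /in_causesP [p pc kp] H]; apply/in_causesP.
exists (down O p.1, p.2); first by apply/in_downMP; exists p.
by apply/in_downP; split => //; exists k.
Qed.

Lemma maxO_sub O K : maxO O K `<=` K.
Proof. by apply/fsubsetP => y /in_maxOP []. Qed.

Lemma evsP O x : x \in evs O <-> exists b, (x, b) \in pev O.
Proof.
split; first by case/imfsetP => -[y b] /= yb ->; exists b.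
by case=> b xb; apply/imfsetP; exists (x, b).
Qed.

Lemma pev_evs O p : p \in pev O -> p.1 \in evs O.
Proof. by case: p => x b xb; apply/evsP; exists b. Qed.

Section Poset.
Variables (O : poset E Act) (HO : is_poset O).

Lemma pev_fst_inj p q : p \in pev O -> q \in pev O -> p.1 = q.1 -> p = q.
Proof.
case: HO => H _; case: p q => x a [y b] /= xa yb exy; subst y.
by rewrite (H x a b).
Qed.

Lemma pord_evs1 x y : (x, y) \in pord O -> x \in evs O.
Proof. by case: HO => _ [H _] /H []. Qed.
Lemma pord_evs2 x y : (x, y) \in pord O -> y \in evs O.
Proof. by case: HO => _ [H _] /H []. Qed.
Lemma pord_refl x : x \in evs O -> (x, x) \in pord O.
Proof. by case: HO => _ [_ [H _]] /H. Qed.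
Lemma pord_anti x y : (x, y) \in pord O -> (y, x) \in pord O -> x = y.
Proof. by case: HO => _ [_ [_ [H _]]] /H H1 /H1. Qed.
Lemma pord_trans x y z : (x, y) \in pord O -> (y, z) \in pord O -> (x, z) \in pord O.
Proof. by case: HO => _ [_ [_ [_ H]]]; apply: H. Qed.

Lemma down_closed_down K : down_closed O (down O K).
Proof.
move=> x y /in_downP [_ [k kK [kO yk]]] xO xy; apply/in_downP; split => //.
by exists k => //; split => //; apply: pord_trans yk.
Qed.

Lemma mem_down_self K p : K `<=` pev O -> p \in K -> p \in down O K.
Proof.
move=> /fsubsetP sK pK; apply/in_downP; split; first exact: sK.
by exists p => //; split; [exact: sK | apply: pord_refl; apply: pev_evs; apply: sK].
Qed.

Lemma down_id K : K `<=` pev O -> down_closed O K -> down O K = K.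
Proof.
move=> sK dK; apply/fsetP => p; apply/idP/idP; last exact: mem_down_self.
by case/in_downP => pO [k kK [_ pk]]; apply: (dK p k).
Qed.

Lemma down_idem K : down O (down O K) = down O K.
Proof. by apply: down_id; [exact: down_sub_pev | exact: down_closed_down]. Qed.

Lemma PmarkingE c : Pmarking O c <-> forall p, p \in c -> down O p.1 = p.1.
Proof.
split; first by case=> _ H p /H [s d]; apply: down_id.
move=> H; split => // p /H <-; split; [exact: down_sub_pev | exact: down_closed_down].
Qed.

Lemma down_causes c : Pmarking O c -> down O (causes c) = causes c.
Proof.
move/PmarkingE => H; apply/fsetP => y; apply/idP/idP.
  case/in_downP => yO [k /in_causesP [p pc kp] [kO yk]].
  apply/in_causesP; exists p => //; rewrite -(H p pc); apply/in_downP; split => //.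
  by exists k.
move=> yc; apply: mem_down_self => //; apply/fsubsetP => q /in_causesP [p pc].
by rewrite -(H p pc) => /in_downP [].
Qed.

Lemma maxO_down K : K `<=` pev O -> maxO O (down O K) = maxO O K.
Proof.
move=> sK; have sK' := fsubsetP sK; apply/fsetP => y; apply/idP/idP.
  case/in_maxOP => /[dup] yd /in_downP [yO [k kK [kO yk]]] Hm.
  have ky : k = y.
    case: (eqVneq k y) => // ne; move: (Hm k (mem_down_self sK kK) ne).
    by rewrite yk.
  subst k; apply/in_maxOP; split => // z zK; apply: Hm; exact: mem_down_self.
case/in_maxOP => yK Hm; apply/in_maxOP; split; first exact: mem_down_self.
move=> z /in_downP [zO [k kK [_ zk]]] nz; apply/negP => yz.
have ky : k = y.
  by case: (eqVneq k y) => // ne; move: (Hm k kK ne); rewrite (pord_trans yz zk).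
subst k; move/eqP: nz; apply; apply: pev_fst_inj (sK' _ yK) _ => //.
exact: pord_anti zk yz.
Qed.

End Poset.

Lemma emb_comp (A B C : poset E Act) f g :
  order_embedding A B f -> order_embedding B C g -> order_embedding A C (g \o f).
Proof.
case=> [[f1 f2] f3] [[g1 g2] g3]; split; first split.
- by move=> p /f1 /g1.
- by move=> x y /f2 /g2.
move=> x y xA yA /= H; apply: f3 => //; apply: g3 => //.
  by case/evsP: xA => b /f1 /pev_evs.
by case/evsP: yA => b /f1 /pev_evs.
Qed.

Section Embedding.
Variables (P Q : poset E Act) (tau : E -> E).
Hypotheses (HP : is_poset P) (HQ : is_poset Q) (Ht : order_embedding P Q tau).

Lemma emb_pev p : p \in pev P -> (tau p.1, p.2) \in pev Q.
Proof. by case: Ht => [[H _] _] /H. Qed.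
Lemma emb_pord x y : (x, y) \in pord P -> (tau x, tau y) \in pord Q.
Proof. by case: Ht => [[_ H] _] /H. Qed.
Lemma emb_pordW x y :
  x \in evs P -> y \in evs P -> (tau x, tau y) \in pord Q -> (x, y) \in pord P.
Proof. by case: Ht => _ H; apply: H. Qed.
Lemma emb_evs x : x \in evs P -> tau x \in evs Q.
Proof. by case/evsP => b /emb_pev /pev_evs. Qed.

Lemma emb_inj x y : x \in evs P -> y \in evs P -> tau x = tau y -> x = y.
Proof.
move=> xP yP exy; have yy : (tau y, tau y) \in pord Q by apply: (pord_refl HQ); exact: emb_evs.
by apply: (pord_anti HP); apply: emb_pordW; rewrite // exy.
Qed.

Lemma emb_pev_inj p q :
  p \in pev P -> q \in pev P -> (tau p.1, p.2) = (tau q.1, q.2) -> p = q.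
Proof.
by case: p q => x a [y b] xa yb [/emb_inj exy ->]; rewrite exy ?(pev_evs xa) ?(pev_evs yb).
Qed.

Lemma renK_emb_sub K : K `<=` pev P -> renK tau K `<=` pev Q.
Proof. by move/fsubsetP => sK; apply/fsubsetP => q /in_renKP [p /sK pK ->]; apply: emb_pev. Qed.

Lemma mem_renK_emb K p :
  K `<=` pev P -> p \in pev P -> ((tau p.1, p.2) \in renK tau K) = (p \in K).
Proof.
move/fsubsetP => sK pP; apply/idP/idP; last exact: renK_f.
by case/in_renKP => q qK e; rewrite (emb_pev_inj pP (sK q qK) e).
Qed.

Lemma renK_emb_inj K X : K `<=` pev P -> X `<=` pev P -> renK tau K = renK tau X -> K = X.
Proof.
move=> sK sX eKX; have [sK' sX'] := (fsubsetP sK, fsubsetP sX).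
by apply/fsetP => p; apply/idP/idP => pY;
  [rewrite -(mem_renK_emb sX) ?(sK' p) // -eKX | rewrite -(mem_renK_emb sK) ?(sX' p) // eKX];
  apply: renK_f.
Qed.

Lemma mem_down_emb K p : K `<=` pev P -> p \in pev P ->
  ((tau p.1, p.2) \in down Q (renK tau K)) = (p \in down P K).
Proof.
move/fsubsetP => sK pP; apply/idP/idP.
  case/in_downP => _ [k /in_renKP [q qK ->] [_ H]]; apply/in_downP; split => //.
  exists q => //; split; first exact: sK.
  by apply: emb_pordW => //; apply: pev_evs => //; apply: sK.
case/in_downP => _ [k kK [kP H]]; apply/in_downP; split; first exact: emb_pev.
by exists (tau k.1, k.2); [apply: renK_f | split; [apply: emb_pev | apply: emb_pord]].
Qed.

Lemma maxO_renK_emb K : K `<=` pev P -> maxO Q (renK tau K) = renK tau (maxO P K).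
Proof.
move=> sK; have sK' := fsubsetP sK; apply/fsetP => y; apply/idP/idP.
  case/in_maxOP => /in_renKP [q qK ->] Hm; apply: renK_f; apply/in_maxOP.
  split => // z zK nzq; have nz : (tau z.1, z.2) != (tau q.1, q.2).
    by apply: contra nzq => /eqP /(emb_pev_inj (sK' _ zK) (sK' _ qK)) ->.
  by apply: contra (Hm _ (renK_f tau zK) nz); exact: emb_pord.
case/in_renKP => q /in_maxOP [qK Hm] ->; apply/in_maxOP; split; first exact: renK_f.
move=> z /in_renKP [r rK ->] nz; apply: contra (Hm _ rK _) => [qr|].
  exact: emb_pordW (pev_evs (sK' _ qK)) (pev_evs (sK' _ rK)) qr.
by apply: contra nz => /eqP ->.
Qed.

End Embedding.

Section Isomorphism.
Variables (O O' : poset E Act) (f g : E -> E).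
Hypotheses (HO : is_poset O) (HO' : is_poset O') (Hf : morphism O O' f) (Hg : morphism O' O g)
  (gf : forall x, x \in evs O -> g (f x) = x) (fg : forall y, y \in evs O' -> f (g y) = y).

Lemma iso_emb : order_embedding O O' f.
Proof. by split => // x y xO yO /(proj2 Hg); rewrite !gf. Qed.

Lemma iso_inv_emb : order_embedding O' O g.
Proof. by split => // x y xO yO /(proj2 Hf); rewrite !fg. Qed.

Lemma down_renK_iso K : K `<=` pev O -> down O' (renK f K) = renK f (down O K).
Proof.
move=> sK; apply/fsetP => q; apply/idP/idP; last first.
  by case/in_renKP => p pd ->; rewrite (mem_down_emb iso_emb) // (fsubsetP (down_sub_pev O K)).
move=> qd; have qO' : q \in pev O' := fsubsetP (down_sub_pev _ _) q qd.
have gq : (g q.1, q.2) \in pev O by exact: (proj1 Hg).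
have -> : q = (f (g q.1), q.2) by rewrite fg ?(pev_evs qO') //; case: q {qd gq} qO'.
apply: (renK_f f (p := (g q.1, q.2))); rewrite -(mem_down_emb iso_emb) // fg ?(pev_evs qO') //.
by case: q qd {qO' gq}.
Qed.

Lemma Pmarking_iso c : Pmarking O c -> Pmarking O' (renM f c).
Proof.
move=> Hc; have /PmarkingE H := Hc; apply/(PmarkingE HO') => q /in_renMP [p pc ->] /=.
by rewrite down_renK_iso ?H //; case: Hc => _ /(_ p pc) [].
Qed.

End Isomorphism.

Section Delta.
Variables (O : poset E Act) (K : {fset E * Act}) (e : E) (a : Act).
Hypotheses (HO : is_poset O) (He : e \notin evs O).
Local Notation D := (delta O K e a).

Lemma in_pev_delta p : (p \in pev D) = (p \in pev O) || (p == (e, a)).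
Proof. by rewrite /= in_fsetU in_fset1. Qed.

Lemma in_pord_delta x y : (x, y) \in pord D <->
  (x, y) \in pord O \/ (y = e /\ exists2 z, z \in down O K & z.1 = x) \/ (x = e /\ y = e).
Proof.
rewrite /= !in_fsetU in_fset1; split.
  case/orP => [/orP [H|/imfsetP [z zd [-> ->]]]|/eqP [-> ->]].
  - by left.
  - by right; left; split => //; exists z.
  - by right; right.
case=> [->//|[[-> [z zd <-]]|[-> ->]]]; last by rewrite eqxx !orbT.
by rewrite (in_imfset _ (fun y => (y.1, e)) zd) orbT.
Qed.

Lemma evs_delta x : x \in evs D <-> x \in evs O \/ x = e.
Proof.
split.
  case/evsP => b; rewrite in_pev_delta => /orP [xb|/eqP [-> _]]; last by right.
  by left; apply/evsP; exists b.
case=> [/evsP [b xb]|->]; apply/evsP; [exists b | exists a]; rewrite in_pev_delta ?xb //.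
by rewrite eqxx orbT.
Qed.

Lemma fresh_pord x y : (x, y) \in pord O -> (x != e) && (y != e).
Proof.
by move=> xy; apply/andP; split; apply: contraNneq He => <-;
  [exact: pord_evs1 xy | exact: pord_evs2 xy].
Qed.

Lemma fresh_pev p : p \in pev O -> p.1 != e.
Proof. by move=> /pev_evs pO; apply: contraNneq He => <-. Qed.

Lemma delta_lab x b1 b2 : (x, b1) \in pev D -> (x, b2) \in pev D -> b1 = b2.
Proof.
rewrite !in_pev_delta => /orP [h1|/eqP [ex eb1]] /orP [h2|/eqP [ex' eb2]].
- by case: HO => H _; apply: (H x).
- by move: (fresh_pev h1); rewrite ex' eqxx.
- by move: (fresh_pev h2); rewrite ex eqxx.
- by subst.
Qed.

Lemma delta_pord_evs p : p \in pord D -> p.1 \in evs D /\ p.2 \in evs D.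
Proof.
case: p => x y /in_pord_delta [H|[[-> [z zd <-]]|[-> ->]]]; rewrite !evs_delta.
- by split; left; [apply: (pord_evs1 HO H) | apply: (pord_evs2 HO H)].
- by split; [left; apply: pev_evs; apply: (fsubsetP (down_sub_pev O K)) | right].
- by split; right.
Qed.

Lemma delta_refl x : x \in evs D -> (x, x) \in pord D.
Proof.
by move=> /evs_delta [xO|->]; apply/in_pord_delta; [left; exact: (pord_refl HO) | right; right].
Qed.

Lemma delta_anti x y : (x, y) \in pord D -> (y, x) \in pord D -> x = y.
Proof.
move=> /in_pord_delta [H1|[[ye _]|[xe ye]]] /in_pord_delta [H2|[[xe2 _]|[ye2 xe2]]];
  subst => //; first exact: (pord_anti HO H1).
all: by [move/fresh_pord: H1; rewrite eqxx ?andbF | move/fresh_pord: H2; rewrite eqxx ?andbF].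
Qed.

Lemma delta_trans x y w : (x, y) \in pord D -> (y, w) \in pord D -> (x, w) \in pord D.
Proof.
move=> /in_pord_delta [H1|[[-> [z zd zx]]|[-> ->]]] /in_pord_delta.
- case=> [H2|[[-> [z' zd' z'y]]|[ye _]]]; apply/in_pord_delta.
  + by left; exact: (pord_trans HO H1 H2).
  + right; left; split => //; case/evsP: (pord_evs1 HO H1) => b xb; exists (x, b) => //.
    by apply: (down_closed_down HO zd') => //=; rewrite z'y.
  + by move/fresh_pord: H1; rewrite ye eqxx andbF.
- case=> [/fresh_pord|[[-> _]|[_ ->]]]; [by rewrite eqxx | |];
    by apply/in_pord_delta; right; left; split => //; exists z.
- case=> [/fresh_pord|[[-> _]|[_ ->]]]; [by rewrite eqxx | |];
    by apply/in_pord_delta; right; right.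
Qed.

Lemma delta_poset : is_poset D.
Proof.
split; first exact: delta_lab.
split; first exact: delta_pord_evs.
split; first exact: delta_refl.
split; [exact: delta_anti | exact: delta_trans].
Qed.

Lemma down_delta_old X : X `<=` pev O -> down D X = down O X.
Proof.
move/fsubsetP => sX; apply/fsetP => y; apply/idP/idP.
  case/in_downP => yD [k kX [kD /in_pord_delta [H|[[ke _]|[_ ke]]]]];
    try by move: (fresh_pev (sX _ kX)); rewrite ke eqxx.
  apply/in_downP; split; last by exists k => //; split => //; apply: sX.
  move: yD; rewrite in_pev_delta => /orP [//|/eqP ye].
  by move/fresh_pord: H; rewrite ye /= eqxx.
case/in_downP => yO [k kX [kO H]]; apply/in_downP; split; first by rewrite in_pev_delta yO.
by exists k => //; split; [rewrite in_pev_delta kO | apply/in_pord_delta; left].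
Qed.

Lemma down_delta_new : down D [fset (e, a)] = down O K `|` [fset (e, a)].
Proof.
have eD : (e, a) \in pev D by rewrite in_pev_delta eqxx orbT.
apply/fsetP => y; rewrite in_fsetU in_fset1; apply/idP/idP.
  case/in_downP => yD [k]; rewrite in_fset1 => /eqP -> [_ /in_pord_delta].
  move: yD; rewrite in_pev_delta => /orP [yO|->]; last by rewrite orbT.
  case=> [/fresh_pord|[[_ [z zd zy]]|[ye _]]]; first by rewrite eqxx andbF.
    by rewrite (pev_fst_inj HO yO (fsubsetP (down_sub_pev O K) _ zd) (esym zy)) zd.
  by move: (fresh_pev yO); rewrite ye eqxx.
case/orP => [yd|/eqP ->]; apply/in_downP.
  have yO := fsubsetP (down_sub_pev O K) _ yd.
  split; first by rewrite in_pev_delta yO.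
  exists (e, a); first exact: fset11.
  by split => //; apply/in_pord_delta; right; left; split => //; exists y.
split => //; exists (e, a); first exact: fset11.
by split => //; apply/in_pord_delta; right; right.
Qed.

End Delta.

Definition extend (tau : E -> E) (e e' : E) (x : E) : E := if x == e then e' else tau x.

Section Extension.
Variables (P Q : poset E Act) (tau : E -> E) (K : {fset E * Act}) (eP eQ : E) (a : Act).
Hypotheses (HP : is_poset P) (HQ : is_poset Q) (Ht : order_embedding P Q tau)
  (sK : K `<=` pev P) (HeP : eP \notin evs P) (HeQ : eQ \notin evs Q).
Local Notation ext := (extend tau eP eQ).

Lemma extend_old x : x \in evs P -> ext x = tau x.
Proof. by move=> xP; rewrite /extend; case: eqP => // exe; move: HeP; rewrite -exe xP. Qed.

Lemma extend_new : ext eP = eQ.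
Proof. by rewrite /extend eqxx. Qed.

Lemma emb_fresh x : x \in evs P -> tau x != eQ.
Proof. by move=> /(emb_evs Ht) xQ; apply: contraNneq HeQ => <-. Qed.

Lemma extend_morphism : morphism (delta P K eP a) (delta Q (renK tau K) eQ a) ext.
Proof.
split.
  move=> p; rewrite !in_pev_delta => /orP [pP|/eqP ->]; last by rewrite /= extend_new eqxx orbT.
  by rewrite extend_old ?(emb_pev Ht) ?(pev_evs pP).
move=> x y /in_pord_delta [H|[[-> [z zd <-]]|[-> ->]]]; apply/in_pord_delta.
- rewrite (extend_old (pord_evs1 HP H)) (extend_old (pord_evs2 HP H)).
  by left; exact: (emb_pord Ht).
- have zP := fsubsetP (down_sub_pev P K) z zd.
  rewrite extend_new extend_old ?(pev_evs zP) //; right; left; split => //.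
  by exists (tau z.1, z.2); rewrite ?(mem_down_emb Ht).
- by rewrite extend_new; right; right.
Qed.

Lemma extend_pordW x y : x \in evs (delta P K eP a) -> y \in evs (delta P K eP a) ->
  (ext x, ext y) \in pord (delta Q (renK tau K) eQ a) -> (x, y) \in pord (delta P K eP a).
Proof.
move=> /evs_delta [xP|->] /evs_delta [yP|->]; rewrite ?extend_new ?extend_old //.
- case/in_pord_delta => [H|[[ye _]|[_ ye]]]; try by move: (emb_fresh yP); rewrite ye eqxx.
  by apply/in_pord_delta; left; exact: (emb_pordW Ht).
- case/in_pord_delta => [/(fresh_pord HQ HeQ)|[[_ [z zd zx]]|[xe _]]]; first by rewrite eqxx andbF.
    case/evsP: xP => b xb; apply/in_pord_delta; right; left; split => //; exists (x, b) => //.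
    have zQ := fsubsetP (down_sub_pev Q (renK tau K)) z zd.
    by rewrite -(mem_down_emb Ht) //= -(pev_fst_inj HQ zQ (emb_pev Ht xb) zx).
  by move: (emb_fresh xP); rewrite xe eqxx.
- case/in_pord_delta => [/(fresh_pord HQ HeQ)|[[ye _]|[_ ye]]];
    try by move: (emb_fresh yP); rewrite ye eqxx.
  by rewrite eqxx.
- by move=> _; apply/in_pord_delta; right; right.
Qed.

Lemma extend_emb : order_embedding (delta P K eP a) (delta Q (renK tau K) eQ a) ext.
Proof. by split; [exact: extend_morphism | exact: extend_pordW]. Qed.

End Extension.

Lemma Pmarking_mem O c p q : Pmarking O c -> p \in c -> q \in p.1 -> q \in pev O.
Proof. by case=> _ H /H [/fsubsetP sp _] /sp. Qed.

Lemma Pmarking_causes_sub O c : Pmarking O c -> causes c `<=` pev O.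
Proof. by move=> Hc; apply/fsubsetP => q /in_causesP [p pc]; apply: Pmarking_mem Hc pc. Qed.

Lemma PmarkingU O c c1 : Pmarking O (c `|` c1) -> Pmarking O c /\ Pmarking O c1.
Proof. by case=> HO H; split; split => // p pc; apply: H; rewrite in_fsetU pc ?orbT. Qed.

Lemma Pmarking_downM O c : is_poset O -> Pmarking O (downM O c).
Proof. by move=> HO; apply/(PmarkingE HO) => q /in_downMP [p _ ->]; exact: down_idem. Qed.

Lemma renM_inv O (f g : E -> E) c : Pmarking O c ->
  (forall y, y \in evs O -> f (g y) = y) -> renM f (renM g c) = c.
Proof.
move=> Hc fg; rewrite renM_comp -[RHS]renM_id; apply: eq_in_imfset => p pc /=.
congr (_, _); apply: eq_in_renK => q qp /=.
by rewrite fg //; apply: pev_evs; apply: Pmarking_mem Hc pc qp.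
Qed.

Lemma imfset_eqU (U V : choiceType) (F : U -> V) (D : {fset U}) (A B : {fset V}) :
  F @` D = A `|` B -> exists D1 D2, [/\ D = D1 `|` D2, A = F @` D1 & B = F @` D2].
Proof.
move=> FD; exists [fset x in D | F x \in A], [fset x in D | F x \in B].
have FDP x : x \in D -> (F x \in A) || (F x \in B) by move=> xD; rewrite -in_fsetU -FD in_imfset.
have imP (Y : {fset V}) : Y `<=` A `|` B -> Y = F @` [fset x in D | F x \in Y].
  move/fsubsetP => sY; apply/fsetP => y; apply/idP/idP; last first.
    by case/imfsetP => x; rewrite !inE => /andP [_ ?] ->.
  move=> yY; move: (sY y yY); rewrite -FD => /imfsetP [x xD yx].
  by apply/imfsetP; exists x => //; rewrite !inE xD -yx.
split; [|apply: imP; exact: fsubsetUl | apply: imP; exact: fsubsetUr].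
apply/fsetP => x; rewrite in_fsetU !inE.
by case xD: (x \in D); rewrite //= FDP.
Qed.

Section Net.
Variables (Fin : S -> T -> Prop) (Fout : T -> S -> Prop) (l : T -> Act)
  (rep : poset E Act -> poset E Act) (alpha : poset E Act -> E -> E) (fresh : {fset E} -> E).
Hypotheses (Hrep : canonical_reps rep alpha) (Hfresh : fresh_spec fresh).

Local Notation oldA := (oldA alpha fresh).
Local Notation newA := (newA alpha fresh).
Local Notation deltaA := (deltaA rep fresh).
Local Notation deltaE := (deltaE fresh).
Local Notation stepAC := (stepAC Fin Fout l rep alpha fresh).
Local Notation simAC := (simAC Fin Fout l rep alpha fresh).

Lemma rep_iso O : is_poset O -> is_poset (rep O) /\ exists g,
  [/\ morphism O (rep O) (alpha O), morphism (rep O) O g,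
      forall x, x \in evs O -> g (alpha O x) = x &
      forall y, y \in evs (rep O) -> alpha O (g y) = y].
Proof. by move=> HO; case: (proj1 Hrep O HO) => ? [? [g [? [? ?]]]]; split => //; exists g. Qed.

Lemma rep_idem O : is_poset O -> rep (rep O) = rep O.
Proof.
move=> HO; have [HR [g [f_mor g_mor gf fg]]] := rep_iso HO.
by apply: (proj2 Hrep) => //; exists g; split => //; exists (alpha O).
Qed.

Lemma deltaE_poset O K a : is_poset O -> is_poset (deltaE O K a).
Proof. by move=> HO; apply: delta_poset => //; apply: Hfresh. Qed.

Lemma deltaA_poset O K a : is_poset O -> is_poset (deltaA O K a).
Proof. by move=> HO; exact: (proj1 (rep_iso (deltaE_poset K a HO))). Qed.

Lemma deltaA_abstract O K a : is_poset O -> is_abstract rep (deltaA O K a).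
Proof. by move=> HO; apply: rep_idem; apply: deltaE_poset. Qed.

Definition fireA O K a (c c1 : marking E Act S) (m : {fset S}) : marking E Act S :=
  [fset (renK (oldA O K a) (causes c) `|` [fset (newA O K a, a)], s) | s in m]
    `|` renM (oldA O K a) c1.

(* CG_AC transitions with the underlying CG_C transition and the isomorphism
   alpha eliminated; on abstract posets this is equivalent to stepAC. *)
Definition stepA O (M : marking E Act S) K a O2 (M2 : marking E Act S) : Prop :=
  exists (t : T) (c c1 : marking E Act S) (m : {fset S}),
  [/\ M = c `|` c1, forall s, s \in places c <-> Fin s t, forall s, s \in m <-> Fout t s,
      a = l t & K = maxO O (causes c)] /\
  O2 = deltaA O K a /\ M2 = fireA O K a c c1 m.

Lemma renM_fire O0 (f : E -> E) O K a e c0 c10 (m : {fset S}) :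
  e \notin evs O0 -> Pmarking O0 (c0 `|` c10) ->
  renM (fun x => if x == e then newA O K a else oldA O K a (f x))
    ([fset (causes c0 `|` [fset (e, a)], s) | s in m] `|` c10)
  = fireA O K a (renM f c0) (renM f c10) m.
Proof.
move=> He /PmarkingU [H0 H1]; have old q : q \in pev O0 -> (q.1 == e) = false.
  by move=> /pev_evs qO; apply: contraNF He => /eqP <-.
rewrite renMU; congr (_ `|` _).
  rewrite /renM -imfset_comp; apply: eq_imfset => // s' /=.
  rewrite renKU renK1 /= eqxx causes_renM renK_comp; congr ((_ `|` _), _).
  by apply: eq_in_renK => q /(fsubsetP (Pmarking_causes_sub H0)) /old /= ->.
rewrite !renM_comp; apply: eq_in_imfset => p pc /=; congr (_, _).
by apply: eq_in_renK => q /(Pmarking_mem H1 pc) /old /= ->.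
Qed.

Lemma stepAC_stepA O M K a O2 M2 : stepAC O M K a O2 M2 -> stepA O M K a O2 M2.
Proof.
case=> O0 [M0 [K0 [e [O0' [M0' [HC [-> [-> [-> [-> ->]]]]]]]]]].
case: HC => t [c0 [c10 [m [HPm [HM0 [Hpl [Hm [Ha [He [-> [_ ->]]]]]]]]]]].
subst M0; have HO0 := HPm.1; have [HR [g [fmor gmor gf fg]]] := rep_iso HO0.
have [Hc0 _] := PmarkingU HPm.
exists t, (renM (alpha O0) c0), (renM (alpha O0) c10), m; split; first split => //.
- by rewrite renMU.
- by move=> s; rewrite places_renM.
- rewrite causes_renM (maxO_renK_emb HO0 HR (iso_emb fmor gmor gf)) //.
  exact: Pmarking_causes_sub.
by split => //; exact: (renM_fire _ _ _ _ _ He HPm).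
Qed.

Lemma stepA_stepAC O M K a O2 M2 : is_abstract rep O -> Pmarking O M ->
  stepA O M K a O2 M2 -> stepAC O M K a O2 M2.
Proof.
move=> Hab HM [t [c [c1 [m [[HMe Hpl Hm Ha HK] [HO2 HM2]]]]]].
have HO := HM.1; have [HR [g [fmor gmor gf fg]]] := rep_iso HO.
rewrite Hab in HR fmor gmor fg.
have [Hc Hc1] : Pmarking O c /\ Pmarking O c1 by apply: PmarkingU; rewrite -HMe.
have HgM : Pmarking O (renM g M) := Pmarking_iso HO HO gmor fmor fg gf HM.
have HgMU : Pmarking O (renM g c `|` renM g c1) by rewrite -renMU -HMe.
set K0 := maxO O (causes (renM g c)); set e := fresh (evs O).
exists O, (renM g M), K0, e, (delta O K0 e a),
  ([fset (causes (renM g c) `|` [fset (e, a)], s) | s in m] `|` renM g c1).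
split.
  exists t, (renM g c), (renM g c1), m.
  split => //; split; first by rewrite HMe renMU.
  split; first by move=> s; rewrite places_renM.
  by split => //; split => //; split; [exact: Hfresh | split].
split; first by rewrite Hab.
split; first by rewrite (renM_inv HM fg).
split.
  rewrite HK /K0 -(maxO_renK_emb HO HO (iso_emb fmor gmor gf)).
    by rewrite -causes_renM (renM_inv Hc fg).
  exact: Pmarking_causes_sub (PmarkingU HgMU).1.
split => //; rewrite HM2 (renM_fire _ _ _ _ _ (Hfresh _) HgMU).
by rewrite (renM_inv Hc fg) (renM_inv Hc1 fg).
Qed.

Lemma Pmarking_fire_delta O K a (c c1 : marking E Act S) (m : {fset S}) :
  Pmarking O c -> Pmarking O c1 -> K `<=` causes c ->
  Pmarking (deltaE O K a) ([fset (causes c `|` [fset (fresh (evs O), a)], s) | s in m] `|` c1).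
Proof.
move=> Hc Hc1 sK; have HO := Hc.1; have He := Hfresh (evs O).
apply/(PmarkingE (deltaE_poset K a HO)) => p /fsetUP [/imfsetP [s' _ ->]|pc1] /=.
  rewrite downU (down_delta_old _ _ HO He) ?(Pmarking_causes_sub Hc) //.
  have sub : down O K `<=` causes c by rewrite -(down_causes HO Hc); exact: down_subset.
  by rewrite down_delta_new // (down_causes HO Hc) fsetUA (fsetUidPl _ _ sub).
rewrite (down_delta_old _ _ HO He); last by apply/fsubsetP => q; exact: Pmarking_mem Hc1 pc1.
by case: Hc1 => _ /(_ p pc1) [? ?]; exact: down_id.
Qed.

Lemma stepA_Pmarking O e K a O2 e' : Pmarking O e -> stepA O e K a O2 e' -> Pmarking O2 e'.
Proof.
move=> He [t [c [c1 [m [[HMe _ _ _ HK] [-> ->]]]]]].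
have [Hc Hc1] : Pmarking O c /\ Pmarking O c1 by apply: PmarkingU; rewrite -HMe.
have HdO := deltaE_poset K a He.1; have [HR [g [fmor gmor gf fg]]] := rep_iso HdO.
have sK : K `<=` causes c by rewrite HK maxO_sub.
have := Pmarking_iso HdO HR fmor gmor gf fg (@Pmarking_fire_delta O K a c c1 m Hc Hc1 sK).
rewrite renMU /renM -imfset_comp /fireA.
by congr (Pmarking _ (_ `|` _)); apply: eq_imfset => // s' /=; rewrite renKU renK1.
Qed.

Lemma stepA_sub O e K a O2 e' : Pmarking O e -> stepA O e K a O2 e' -> K `<=` pev O.
Proof.
move=> He [t [c [c1 [m [[HMe _ _ _ ->] _]]]]].
have [Hc _] : Pmarking O c /\ Pmarking O c1 by apply: PmarkingU; rewrite -HMe.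
exact: fsubset_trans (maxO_sub _ _) (Pmarking_causes_sub Hc).
Qed.

Definition lifts P Q (tau : E -> E) K a (tau' : E -> E) : Prop :=
  forall x, x \in evs (deltaE P K a) ->
    tau' (oldA P K a x) = oldA Q (renK tau K) a (extend tau (fresh (evs P)) (fresh (evs Q)) x).

Section Lift.
Variables (P Q : poset E Act) (tau : E -> E) (K : {fset E * Act}) (a : Act).
Hypotheses (HP : is_poset P) (HQ : is_poset Q) (Ht : order_embedding P Q tau)
  (sK : K `<=` pev P).
Local Notation KQ := (renK tau K).
Local Notation ext := (extend tau (fresh (evs P)) (fresh (evs Q))).

Lemma ext_emb : order_embedding (deltaE P K a) (deltaE Q KQ a) ext.
Proof. by apply: extend_emb => //; exact: Hfresh. Qed.

Lemma lift_exists : exists tau',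
  order_embedding (deltaA P K a) (deltaA Q KQ a) tau' /\ lifts P Q tau K a tau'.
Proof.
have [_ [gP [mP mP' gfP fgP]]] := rep_iso (deltaE_poset K a HP).
have [_ [gQ [mQ mQ' gfQ _]]] := rep_iso (deltaE_poset KQ a HQ).
exists (oldA Q KQ a \o ext \o gP); split; last by move=> x xd /=; rewrite gfP.
apply: emb_comp (iso_emb mQ mQ' gfQ); apply: emb_comp (iso_inv_emb mP mP' fgP) _.
exact: ext_emb.
Qed.

Variables (tau' : E -> E) (Hl : lifts P Q tau K a tau').

Lemma down_lift X : X `<=` pev (deltaE P K a) ->
  down (deltaA Q KQ a) (renK tau' (renK (oldA P K a) X))
  = renK (oldA Q KQ a) (down (deltaE Q KQ a) (renK ext X)).
Proof.
move=> sX; have [_ [gQ [mQ mQ' gfQ fgQ]]] := rep_iso (deltaE_poset KQ a HQ).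
have -> : renK tau' (renK (oldA P K a) X) = renK (oldA Q KQ a) (renK ext X).
  rewrite !renK_comp; apply: eq_in_renK => p pX /=.
  by rewrite Hl // (pev_evs (fsubsetP sX _ pX)).
exact: (down_renK_iso mQ mQ' gfQ fgQ (renK_emb_sub ext_emb sX)).
Qed.

Lemma renK_ext C : C `<=` pev P -> renK ext C = renK tau C.
Proof.
move/fsubsetP => sC; apply: eq_in_renK => p pC.
by rewrite (extend_old _ _ (Hfresh (evs P))) // (pev_evs (sC _ pC)).
Qed.

Lemma down_lift_old X : X `<=` pev P ->
  down (deltaA Q KQ a) (renK tau' (renK (oldA P K a) X)) = renK (oldA Q KQ a) (down Q (renK tau X)).
Proof.
move=> sX; rewrite down_lift; last exact: fsubset_trans sX (fsubsetUl _ _).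
by rewrite renK_ext // (down_delta_old _ _ HQ (Hfresh _) (renK_emb_sub Ht sX)).
Qed.

Lemma down_lift_new C : K `<=` C -> C `<=` pev P ->
  down (deltaA Q KQ a) (renK tau' (renK (oldA P K a) C `|` [fset (newA P K a, a)]))
  = renK (oldA Q KQ a) (down Q (renK tau C)) `|` [fset (newA Q KQ a, a)].
Proof.
move=> sKC sC; have eP := fset11 (fresh (evs P), a).
have -> : renK (oldA P K a) C `|` [fset (newA P K a, a)]
          = renK (oldA P K a) (C `|` [fset (fresh (evs P), a)]) by rewrite renKU renK1.
rewrite down_lift; last first.
  by rewrite fsubUset (fsubset_trans sC (fsubsetUl _ _)) fsub1set in_fsetU eP orbT.
rewrite renKU renK1 /= extend_new renK_ext // downU.
rewrite (down_delta_old _ _ HQ (Hfresh _)) ?(renK_emb_sub Ht) //.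
rewrite (down_delta_new _ _ HQ (Hfresh _)) fsetUA renKU renK1.
by rewrite (fsetUidPl _ _ (down_subset _ (renK_subset _ sKC))).
Qed.

Lemma fireA_lift c c1 (m : {fset S}) :
  Pmarking P c -> Pmarking P c1 -> K `<=` causes c ->
  fireA Q KQ a (downM Q (renM tau c)) (downM Q (renM tau c1)) m
  = downM (deltaA Q KQ a) (renM tau' (fireA P K a c c1 m)).
Proof.
move=> Hc Hc1 sKc; rewrite /fireA causes_downM causes_renM renMU downMU.
congr (_ `|` _).
  rewrite /downM /renM -!imfset_comp; apply: eq_imfset => // s' /=.
  by rewrite down_lift_new // Pmarking_causes_sub.
rewrite /downM /renM -!imfset_comp; apply: eq_in_imfset => p pc /=.
by rewrite down_lift_old //; apply/fsubsetP => q; exact: Pmarking_mem Hc1 pc.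
Qed.

End Lift.

Lemma maxO_causes_downM P Q (tau : E -> E) c : is_poset P -> is_poset Q ->
  order_embedding P Q tau -> Pmarking P c ->
  maxO Q (causes (downM Q (renM tau c))) = renK tau (maxO P (causes c)).
Proof.
move=> HP HQ Ht Hc; have sc := Pmarking_causes_sub Hc.
by rewrite causes_downM causes_renM maxO_down ?(renK_emb_sub Ht) // (maxO_renK_emb HP HQ Ht).
Qed.

Lemma stepA_push P Q (tau tau' : E -> E) e K a P2 e' :
  is_poset Q -> order_embedding P Q tau -> Pmarking P e ->
  stepA P e K a P2 e' -> lifts P Q tau K a tau' ->
  stepA Q (downM Q (renM tau e)) (renK tau K) a (deltaA Q (renK tau K) a)
    (downM (deltaA Q (renK tau K) a) (renM tau' e')).
Proof.
move=> HQ Ht He [t [c [c1 [m [[HMe Hpl Hm Ha HK] [_ ->]]]]]] Hl.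
have [Hc Hc1] : Pmarking P c /\ Pmarking P c1 by apply: PmarkingU; rewrite -HMe.
exists t, (downM Q (renM tau c)), (downM Q (renM tau c1)), m; split; first split => //.
- by rewrite HMe renMU downMU.
- by move=> s; rewrite places_downM places_renM.
- by rewrite (maxO_causes_downM He.1 HQ Ht Hc) HK.
have sKc : K `<=` causes c by rewrite HK maxO_sub.
have sK : K `<=` pev P := fsubset_trans sKc (Pmarking_causes_sub Hc).
by split => //; symmetry; exact: (fireA_lift He.1 HQ Ht sK Hl m Hc Hc1 sKc).
Qed.

Lemma stepA_pull P Q (tau : E -> E) e K a Q2 d' :
  is_poset Q -> order_embedding P Q tau -> Pmarking P e ->
  stepA Q (downM Q (renM tau e)) K a Q2 d' ->
  exists K0 e', [/\ K = renK tau K0, stepA P e K0 a (deltaA P K0 a) e' &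
    forall tau', lifts P Q tau K0 a tau' -> d' = downM Q2 (renM tau' e')].
Proof.
move=> HQ Ht He [t [cQ [c1Q [m [[HMe Hpl Hm Ha HK] [-> ->]]]]]].
move: HMe; rewrite downM_renM => /imfset_eqU [c [c1 [HMe]]].
rewrite -!downM_renM => HcQ Hc1Q; subst cQ c1Q.
have [Hc Hc1] : Pmarking P c /\ Pmarking P c1 by apply: PmarkingU; rewrite -HMe.
set K0 := maxO P (causes c).
have sKc : K0 `<=` causes c := maxO_sub _ _.
have sK : K0 `<=` pev P := fsubset_trans sKc (Pmarking_causes_sub Hc).
have HK0 : K = renK tau K0 by rewrite HK (maxO_causes_downM He.1 HQ Ht Hc).
exists K0, (fireA P K0 a c c1 m); split => //.
  exists t, c, c1, m; split => //; split => // s.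
  by rewrite -Hpl places_downM places_renM.
by move=> tau' Hl; rewrite HK0; exact: (fireA_lift He.1 HQ Ht sK Hl m Hc Hc1 sKc).
Qed.

Lemma stepA_deltaA O M K a O2 M2 : stepA O M K a O2 M2 -> O2 = deltaA O K a.
Proof. by case=> t [c [c1 [m [_ [-> _]]]]]. Qed.

Lemma simAC_wf O c1 c2 : simAC O c1 c2 ->
  [/\ is_abstract rep O, Pmarking O c1 & Pmarking O c2].
Proof. by case=> R [HR /HR [Hab [_ [_ [H1 [H2 _]]]]]]. Qed.

Lemma simAC_sym O c1 c2 : simAC O c1 c2 -> simAC O c2 c1.
Proof.
case=> R [HR HO]; exists (fun O' x y => R O' y x); split => //.
move=> O' x y /HR [Hab [h1 [h2 [m1 [m2 [s1 s2]]]]]].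
do 5!(split; first done); split.
  by move=> K a O2 c1' /s2 [c2' [st r]]; exists c2'.
by move=> K a O2 c2' /s1 [c1' [st r]]; exists c1'.
Qed.

Lemma simAC_step O c1 c2 K a O' c1' : simAC O c1 c2 -> stepAC O c1 K a O' c1' ->
  exists c2', stepAC O c2 K a O' c2' /\ simAC O' c1' c2'.
Proof.
case=> R [HR HO] st; have [_ [_ [_ [_ [_ [s1 _]]]]]] := HR _ _ _ HO.
by case: (s1 _ _ _ _ st) => c2' [st2 r]; exists c2'; split => //; exists R.
Qed.

Lemma ACbisim_sym_step
    (R : poset E Act -> poset E Act * marking E Act S -> poset E Act * marking E Act S -> Prop) :
  (forall O x y, R O x y -> x.1 = O /\ y.1 = O) ->
  (forall O c1 c2, R O (O, c1) (O, c2) ->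
     [/\ is_abstract rep O, Pmarking O c1 & Pmarking O c2]) ->
  (forall O c1 c2, R O (O, c1) (O, c2) -> R O (O, c2) (O, c1)) ->
  (forall O c1 c2 K a O' c1', R O (O, c1) (O, c2) -> stepAC O c1 K a O' c1' ->
     exists c2', stepAC O c2 K a O' c2' /\ R O' (O', c1') (O', c2')) ->
  ACbisim Fin Fout l rep alpha fresh R.
Proof.
move=> Rshape Rwf Rsym Rstep O [O1 c1] [O2 c2] H.
have [/= e1 e2] := Rshape _ _ _ H; subst O1 O2.
have [Hab Hc1 Hc2] := Rwf _ _ _ H.
do 5!(split; first done); split; first by move=> K a O' c1'; exact: Rstep.
move=> K a O' c2' /(Rstep _ _ _ _ _ _ _ (Rsym _ _ _ H)) [c1' [st r]].
by exists c1'; split => //; exact: Rsym.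
Qed.

Definition image_rel O (P1 P2 : poset E Act * marking E Act S) : Prop :=
  [/\ P1.1 = O, P2.1 = O, is_abstract rep O, is_poset O &
      exists P (tau : E -> E) c1 c2, [/\ order_embedding P O tau, simAC P c1 c2,
        P1.2 = downM O (renM tau c1) & P2.2 = downM O (renM tau c2)]].

Definition preimage_rel O (P1 P2 : poset E Act * marking E Act S) : Prop :=
  [/\ P1.1 = O, P2.1 = O, is_abstract rep O, Pmarking O P1.2 & Pmarking O P2.2] /\
  exists Q (tau : E -> E), [/\ is_poset Q, order_embedding O Q tau &
    simAC Q (downM Q (renM tau P1.2)) (downM Q (renM tau P2.2))].

Lemma image_rel_step O d1 d2 K a O' d1' :
  image_rel O (O, d1) (O, d2) -> stepAC O d1 K a O' d1' ->
  exists d2', stepAC O d2 K a O' d2' /\ image_rel O' (O', d1') (O', d2').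
Proof.
case=> _ _ Hab HO [P [tau [c1 [c2 [Ht Hs /= -> ->]]]]] /stepAC_stepA st.
have [HabP Hc1 Hc2] := simAC_wf Hs.
have [K0 [c1' [HK st1 Hd1']]] := stepA_pull HO Ht Hc1 st.
have [c2' [/stepAC_stepA st2 Hs']] := simAC_step Hs (stepA_stepAC HabP Hc1 st1).
have [tau' [Ht' Hl]] := lift_exists a Hc1.1 HO Ht (stepA_sub Hc1 st1).
have st2Q := stepA_push HO Ht Hc2 st2 Hl.
rewrite (stepA_deltaA st) HK in Hd1' *.
exists (downM (deltaA O (renK tau K0) a) (renM tau' c2')); split.
  exact: stepA_stepAC Hab (Pmarking_downM _ HO) st2Q.
split => //; [exact: deltaA_abstract | exact: deltaA_poset |].
by exists (deltaA P K0 a), tau', c1', c2'; split => //; exact: Hd1'.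
Qed.

Lemma preimage_rel_step O c1 c2 K a O' c1' :
  preimage_rel O (O, c1) (O, c2) -> stepAC O c1 K a O' c1' ->
  exists c2', stepAC O c2 K a O' c2' /\ preimage_rel O' (O', c1') (O', c2').
Proof.
case=> [[_ _ Hab /= Hc1 Hc2] [Q [tau [HQ Ht Hs]]]] /stepAC_stepA st1.
have [HabQ Hd1 Hd2] := simAC_wf Hs.
have sK := stepA_sub Hc1 st1.
have [tau' [Ht' Hl]] := lift_exists a Hc1.1 HQ Ht sK.
have st1Q := stepA_push HQ Ht Hc1 st1 Hl.
have [d2' [/stepAC_stepA st2Q Hs']] := simAC_step Hs (stepA_stepAC HabQ Hd1 st1Q).
have [K0 [c2' [HK st2 Hd2']]] := stepA_pull HQ Ht Hc2 st2Q.
have {HK}HK0 : K0 = K := renK_emb_inj Hc1.1 HQ Ht (stepA_sub Hc2 st2) sK (esym HK).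
subst K0; have HO' := stepA_deltaA st1; subst O'.
exists c2'; split; first exact: stepA_stepAC Hab Hc2 st2.
split; first by split => //=; [exact: deltaA_abstract Hc1.1 | exact: stepA_Pmarking st1
                                | exact: stepA_Pmarking st2].
exists (deltaA Q (renK tau K) a), tau'; split => //; first exact: deltaA_poset.
by rewrite -(Hd2' _ Hl).
Qed.

Lemma image_rel_bisim : ACbisim Fin Fout l rep alpha fresh image_rel.
Proof.
apply: ACbisim_sym_step; first by move=> O x y [].
- move=> O c1 c2 [_ _ Hab HO [P [tau [e1 [e2 [_ _ /= -> ->]]]]]].
  by split => //; exact: Pmarking_downM.
- move=> O c1 c2 [? ? Hab HO [P [tau [e1 [e2 [Ht Hs /= -> ->]]]]]].
  by split => //; exists P, tau, e2, e1; split => //; exact: simAC_sym.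
- exact: image_rel_step.
Qed.

Lemma preimage_rel_bisim : ACbisim Fin Fout l rep alpha fresh preimage_rel.
Proof.
apply: ACbisim_sym_step; first by move=> O x y [[]].
- by move=> O c1 c2 [[]].
- move=> O c1 c2 [[_ _ Hab Hc1 Hc2] [Q [tau [HQ Ht Hs]]]].
  by split => //; exists Q, tau; split => //; exact: simAC_sym.
- exact: preimage_rel_step.
Qed.

End Net.
End CausalMarkings.

Theorem theorem2 (E Act S T : choiceType)
  (Fin : S -> T -> Prop) (Fout : T -> S -> Prop) (l : T -> Act)
  (rep : poset E Act -> poset E Act) (alpha : poset E Act -> E -> E)
  (fresh : {fset E} -> E) :
  (forall t : T, exists s : S, Fout t s) ->
  canonical_reps rep alpha ->
  fresh_spec fresh ->
  forall (O O' : poset E Act) (sigma : E -> E) (c c' : marking E Act S),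
    is_poset O' ->
    is_abstract rep O -> is_abstract rep O' ->
    order_embedding O O' sigma ->
    Pmarking O c -> Pmarking O c' ->
    (simAC Fin Fout l rep alpha fresh O c c' <->
     simAC Fin Fout l rep alpha fresh O'
       (downM O' (renM sigma c)) (downM O' (renM sigma c'))).
Proof.
move=> _ Hrep Hfresh O O' sigma c c' HO' HabO HabO' Hsigma Hc Hc'; split => Hsim.
  exists (image_rel Fin Fout l rep alpha fresh).
  split; first exact: image_rel_bisim.
  by split => //; exists O, sigma, c, c'.
exists (preimage_rel Fin Fout l rep alpha fresh).
split; first exact: preimage_rel_bisim.
by split => //; exists O', sigma.
Qed.
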